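(* Let $N$ be a finite set with $|N|\ge 2$ and let $\mathcal{D}\subseteq\mathrm{DAG}(N)$ be a facet of $P_N$ which does not contain the empty graph. Then $\mathcal{D}$ is closed under super-graphs: if $G\in\mathcal{D}$ is a subgraph of $H\in\mathrm{DAG}(N)$, then $H\in\mathcal{D}$. Moreover, for every $(a|B)\in\Upsilon$ there exists $G\in\mathcal{D}$ with $\mathrm{pa}_G(a)=B$.
   Context: $\mathrm{DAG}(N)$ is the set of acyclic directed graphs over $N$; $\mathrm{pa}_G(a)$ is the parent set of $a$ in $G$; the empty graph has no arrows. $\Upsilon=\{(a|B): a\in N,\ \emptyset\neq B\subseteq N\setminus\{a\}\}$; $\eta_G\in\mathbb{R}^{\Upsilon}$ has $\eta_G(a|B)=1$ if $B=\mathrm{pa}_G(a)$, else $0$; $P_N=\mathrm{conv}\{\eta_G:G\in\mathrm{DAG}(N)\}$. A set $\mathcal{D}\subseteq\mathrm{DAG}(N)$ is called a facet of $P_N$ if $\mathrm{conv}\{\eta_G:G\in\mathcal{D}\}$ is a facet of $P_N$. *)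

From HB Require Import structures.
From mathcomp Require Import all_boot all_order all_algebra.
Set Implicit Arguments. Unset Strict Implicit. Unset Printing Implicit Defensive.
Import Order.TTheory GRing.Theory Num.Theory.
Local Open Scope ring_scope.

(* Directed graphs over the finite vertex set N: a set of arrows (x,y) = x -> y. *)
Definition graph (N : finType) := {set N * N}.

Definition arrow_rel (N : finType) (G : graph N) : rel N := fun x y => (x, y) \in G.

(* acyclic: no directed cycle, i.e. no x with an arrow x -> y and a directed
   path from y back to x (loops x -> x count as cycles) *)
Definition is_dag (N : finType) (G : graph N) : bool :=
  [forall x, forall y, ~~ (((x, y) \in G) && connect (arrow_rel G) y x)].

Definition DAG (N : finType) : {set graph N} := [set G | is_dag G].

Definition pa (N : finType) (G : graph N) (a : N) : {set N} := [set b | (b, a) \in G].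

Definition Upsilon (N : finType) :=
  {p : N * {set N} | (p.1 \notin p.2) && (p.2 != set0)}.

Definition vec (R : realFieldType) (N : finType) := {ffun Upsilon N -> R}.

Definition eta (R : realFieldType) (N : finType) (G : graph N) : vec R N :=
  [ffun u : Upsilon N => ((pa G (val u).1 == (val u).2) : nat)%:R].

Definition conv (R : realFieldType) (N : finType) (S : {set graph N}) (x : vec R N)
  : Prop :=
  exists w : graph N -> R,
    [/\ forall G, 0 <= w G, forall G, G \notin S -> w G = 0,
        \sum_(G : graph N) w G = 1 &
        forall u, x u = \sum_(G : graph N) w G * @eta R N G u].

Definition PN (R : realFieldType) (N : finType) : vec R N -> Prop := @conv R N (DAG N).

Definition dotv (R : realFieldType) (N : finType) (c x : vec R N) : R :=
  \sum_(u : Upsilon N) c u * x u.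

Definition face (R : realFieldType) (N : finType) (F P : vec R N -> Prop) : Prop :=
  exists (c : vec R N) (d : R),
    (forall x, P x -> dotv c x <= d) /\
    (forall x, F x <-> (P x /\ dotv c x = d)).

Definition aff_indep (R : realFieldType) (N : finType) (k : nat)
  (p : 'I_k.+1 -> vec R N) : Prop :=
  forall c : 'I_k.+1 -> R,
    \sum_i c i = 0 -> (forall u, \sum_i c i * p i u = 0) -> forall i, c i = 0.

Definition affdim_atleast (R : realFieldType) (N : finType) (F : vec R N -> Prop)
  (k : nat) : Prop :=
  exists p : 'I_k.+1 -> vec R N, (forall i, F (p i)) /\ aff_indep p.

Definition has_affdim (R : realFieldType) (N : finType) (F : vec R N -> Prop)
  (d : int) : Prop :=
  (d = -1 /\ forall x, ~ F x) \/
  (exists k : nat, d = k%:Z /\ affdim_atleast F k /\ ~ affdim_atleast F k.+1).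

Definition facet_of (R : realFieldType) (N : finType) (F P : vec R N -> Prop) : Prop :=
  face F P /\ exists d : int, has_affdim P d /\ has_affdim F (d - 1).

Definition is_facet (R : realFieldType) (N : finType) (D : {set graph N}) : Prop :=
  D \subset DAG N /\ facet_of (@conv R N D) (@PN R N).

(* The facet is cut out by a valid inequality [dotv c x <= d]; since it avoids
   [eta set0 = 0], we have [d != 0].  If no graph of the facet had [pa a = B],
   the facet would also lie in the hyperplane [x (a|B) = 0].  As [0] and the
   [eta] of the star graph [B -> a] are points of [P_N] off the first and the
   second hyperplane respectively, [P_N] would then have dimension at least two
   more than the facet.
   Closure under supergraphs follows by adding one arrow [b -> a] at a time to a
   graph [K] of the facet: take [G] in the facet with [pa G a = b |: pa K a] and
   move [b -> a] from [G] to [K].  The score [dotv c (eta _)] is a sum of local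
   scores of the parent sets, so the total score [2 d] of the pair is preserved;
   as each score is at most [d], the enlarged [K] scores [d] and is on the facet. *)

From HB Require Import structures.
From mathcomp Require Import all_boot all_order all_algebra zify lra.
Import Order.TTheory GRing.Theory Num.Theory.
Set Implicit Arguments. Unset Strict Implicit. Unset Printing Implicit Defensive.
Local Open Scope ring_scope.

Lemma mem_sup_of_setU1_closed (T : finType) (S : {set {set T}}) (H : {set T}) :
  (forall K x, K \in S -> K \subset H -> x \in H :\: K -> x |: K \in S) ->
  forall G, G \in S -> G \subset H -> H \in S.
Proof.
move=> step G; move: {2}_.+1 (ltnSn #|H :\: G|) => n.
elim: n G => // n IH G ltGn GS sGH.
case: (set_0Vmem (H :\: G)) => [/eqP | [x xHG]].
  rewrite setD_eq0 => sHG.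
  by have -> : H = G by apply/eqP; rewrite eqEsubset sHG sGH.
apply: IH (step _ _ GS sGH xHG) _; last first.
  by move: xHG; rewrite inE subUset sub1set => /andP[_ ->].
rewrite setUC -setDDl; move: ltGn; rewrite (cardsD1 x (H :\: G)) xHG; lia.
Qed.

Section Dags.

Variable N : finType.
Implicit Types (G H : graph N) (a b x : N).

Lemma dag_loopN G x : is_dag G -> (x, x) \notin G.
Proof. by move=> /forallP /(_ x) /forallP /(_ x); rewrite connect0 andbT. Qed.

Lemma dag_sub G H : G \subset H -> is_dag H -> is_dag G.
Proof.
move=> sGH /forallP dH; apply/forallP => x; apply/forallP => y.
apply: contra (forallP (dH x) y) => /andP [/(subsetP sGH) -> /= Gyx].
by apply: connect_sub Gyx => u v uv; apply/connect1/(subsetP sGH).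
Qed.

Lemma dag_set0 : is_dag (set0 : graph N).
Proof. by apply/forallP => x; apply/forallP => y; rewrite inE. Qed.

Lemma dag_star (B : {set N}) a : a \notin B -> is_dag [set (b, a) | b in B].
Proof.
move=> aB; apply/forallP => x; apply/forallP => y; apply/negP => /andP [].
case/imsetP => b bB [{x}-> {y}->] /connectP [[|z p] /= p_ax ba].
  by rewrite -ba bB in aB.
case/andP: p_ax => /imsetP [b' b'B [ab' _]]; by rewrite ab' b'B in aB.
Qed.

Lemma pa_star (B : {set N}) a : pa [set (b, a) | b in B] a = B.
Proof.
apply/setP => y; rewrite inE.
by apply/imsetP/idP => [[b bB [yb]] | yB]; [rewrite yb | exists y].
Qed.

Lemma pa_setU1 G b a x :
  pa ((b, a) |: G) x = if x == a then b |: pa G x else pa G x.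
Proof.
apply/setP => y; case: (eqVneq x a) => [->|/negbTE xa];
by rewrite !inE xpair_eqE ?eqxx ?andbT ?xa ?andbF.
Qed.

Lemma pa_setD1 G b a x :
  pa (G :\ (b, a)) x = if x == a then pa G x :\ b else pa G x.
Proof.
apply/setP => y; case: (eqVneq x a) => [->|/negbTE xa];
by rewrite !inE xpair_eqE ?eqxx ?andbT ?xa ?andbF.
Qed.

End Dags.

Section Eta.

Variables (R : realFieldType) (N : finType).
Implicit Types (G H : graph N) (S : {set graph N}) (c : vec R N).

Lemma etaE G u : eta R G u = (pa G (val u).1 == (val u).2)%:R.
Proof. by rewrite ffunE. Qed.

Lemma eta_set0 : eta R (set0 : graph N) = 0.
Proof.
apply/ffunP => u; rewrite etaE ffunE.
case/andP: (valP u) => _ /negbTE uB; suff -> : pa set0 (val u).1 = set0 by rewrite eq_sym uB.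
by apply/setP => y; rewrite !inE.
Qed.

Lemma eta_conv S G : G \in S -> conv S (eta R G).
Proof.
move=> GS; exists (fun H => (H == G)%:R); split.
- by move=> H; rewrite ler0n.
- by move=> H; apply: contraNeq; rewrite pnatr_eq0 eqb0 negbK => /eqP ->.
- by rewrite (bigD1 G) //= eqxx big1 ?addr0 // => H /negbTE ->.
- move=> u; rewrite (bigD1 G) //= eqxx mul1r big1 ?addr0 // => H /negbTE ->.
  by rewrite mul0r.
Qed.

Lemma eta_pa_eq G H x :
  is_dag G -> eta R G = eta R H -> pa G x != set0 -> pa H x = pa G x.
Proof.
move=> dG eGH nG; have uP : (x \notin pa G x) && (pa G x != set0).
  by rewrite nG andbT inE dag_loopN.
move/ffunP/(_ (exist _ (x, pa G x) uP)): eGH; rewrite !etaE /= eqxx.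
by case: eqP => // _ /eqP; rewrite oner_eq0.
Qed.

Lemma eta_inj : {in DAG N &, injective (@eta R N)}.
Proof.
move=> G H; rewrite !inE => dG dH eGH.
suff paGH x : pa G x = pa H x by apply/setP => -[y x]; move/setP/(_ y): (paGH x); rewrite !inE.
have [pG0|nG] := eqVneq (pa G x) set0; last by rewrite (eta_pa_eq dG eGH nG).
have [pH0|nH] := eqVneq (pa H x) set0; first by rewrite pG0 pH0.
exact: eta_pa_eq dH (esym eGH) nH.
Qed.

Lemma convex_comb_eq0 (I : finType) (w f : I -> R) i :
  (forall j, 0 <= w j) -> (forall j, 0 <= f j) ->
  \sum_j w j * f j = 0 -> 0 < w i -> f i = 0.
Proof.
move=> w0 f0 /psumr_eq0P - /(_ (fun j _ => mulr_ge0 (w0 j) (f0 j)) i isT).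
by move/eqP; rewrite mulf_eq0 => /orP [/eqP -> | /eqP //]; rewrite ltxx.
Qed.

(* The 0/1 coordinates of [eta H] force every graph of positive weight in a
   convex combination representing it to have the same [eta]. *)
Lemma conv_eta_mem S H : S \subset DAG N -> H \in DAG N -> conv S (eta R H) -> H \in S.
Proof.
move=> sS dH [w [w0 wS w1 we]].
have [G wG | w_le0] := pickP (fun G => 0 < w G); last first.
  have : \sum_G w G = 0.
    by rewrite big1 // => G _; apply/eqP; rewrite eq_le w0 andbT leNgt w_le0.
  by rewrite w1 => /eqP; rewrite oner_eq0.
have GS : G \in S by apply: contraTT wG => /wS ->; rewrite ltxx.
suff -> : H = G by [].
apply: eta_inj dH (subsetP sS _ GS) _; apply/ffunP => u; move: (we u).
have eta_ge0 K : 0 <= eta R K u by rewrite etaE ler0n.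
rewrite (etaE H u); case: eqP => _ e; apply/esym; last first.
  exact: convex_comb_eq0 w0 eta_ge0 (esym e) wG.
have : 1 - eta R G u = 0.
  apply: (convex_comb_eq0 (f := fun K => 1 - eta R K u)) wG => // [K|].
    by rewrite subr_ge0 etaE lern1 leq_b1.
  by under eq_bigr do rewrite mulrBr mulr1; rewrite sumrB w1 -e subrr.
by move/eqP; rewrite subr_eq0 => /eqP <-.
Qed.

Definition local_score c a (X : {set N}) : R := \sum_(u | val u == (a, X)) c u.

Lemma dotv_eta c G : dotv c (eta R G) = \sum_a local_score c a (pa G a).
Proof.
rewrite /dotv (partition_big (fun u : Upsilon N => (val u).1) predT) //=.
apply: eq_bigr => a _; rewrite /local_score big_mkcond [RHS]big_mkcond /=.
apply: eq_bigr => u _.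
rewrite etaE /=; case: (sval u) => y B /=; rewrite xpair_eqE.
have [->|//] := eqVneq y a.
by rewrite /= eq_sym; case: eqP; rewrite ?mulr1 ?mulr0.
Qed.

Lemma dotv_eta_bigD1 c G a :
  dotv c (eta R G) = local_score c a (pa G a) + \sum_(x | x != a) local_score c x (pa G x).
Proof. by rewrite dotv_eta (bigD1 a). Qed.

Lemma dotv_eta_exchange c G G' K K' a :
  (forall x, x != a -> pa G' x = pa G x) -> (forall x, x != a -> pa K' x = pa K x) ->
  pa G' a = pa K a -> pa K' a = pa G a ->
  dotv c (eta R G') + dotv c (eta R K') = dotv c (eta R G) + dotv c (eta R K).
Proof.
move=> GG' KK' G'a K'a; rewrite !(dotv_eta_bigD1 c _ a) G'a K'a.
have -> : \sum_(x | x != a) local_score c x (pa G' x) =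
          \sum_(x | x != a) local_score c x (pa G x) by apply: eq_bigr => x /GG' ->.
have -> : \sum_(x | x != a) local_score c x (pa K' x) =
          \sum_(x | x != a) local_score c x (pa K x) by apply: eq_bigr => x /KK' ->.
lra.
Qed.

Lemma dotv0 c : dotv c 0 = 0.
Proof. by rewrite /dotv big1 // => u _; rewrite ffunE mulr0. Qed.

Lemma dotv_coord (u : Upsilon N) (x : vec R N) : dotv [ffun v => (v == u)%:R] x = x u.
Proof.
rewrite /dotv (bigD1 u) //= ffunE eqxx mul1r big1 ?addr0 // => v /negbTE vu.
by rewrite ffunE vu mul0r.
Qed.

Lemma dotv_lincomb (I : finType) c (k : I -> R) (p : I -> vec R N) :
  \sum_i k i * dotv c (p i) = \sum_v c v * \sum_i k i * p i v.
Proof.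
under eq_bigr do rewrite /dotv mulr_sumr.
rewrite exchange_big; apply: eq_bigr => v _; rewrite mulr_sumr.
by apply: eq_bigr => i _; rewrite mulrCA.
Qed.

End Eta.

Section AffineDimension.

Variables (R : realFieldType) (N : finType).
Implicit Types (P Q F : vec R N -> Prop) (c e y : vec R N).

Lemma affdim_atleast0 P (x : vec R N) : P x -> affdim_atleast P 0.
Proof.
move=> Px; exists (fun=> x); split=> // k sk _ i.
by move: sk; rewrite big_ord1 (ord1 i).
Qed.

Lemma affdim_atleastS Q P c y d m :
  (forall x, Q x -> P x /\ dotv c x = d) -> P y -> dotv c y != d ->
  affdim_atleast Q m -> affdim_atleast P m.+1.
Proof.
move=> QP Py yd [p [Qp p_indep]].
pose q (i : 'I_m.+2) := if unlift ord_max i is Some j then p j else y.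
have q_max : q ord_max = y by rewrite /q unlift_none.
have q_lift j : q (lift ord_max j) = p j by rewrite /q liftK.
exists q; split=> [i|k sk rel].
  by rewrite /q; case: unlift => [j|//]; exact: (QP _ (Qp j)).1.
have sum_lift (f : 'I_m.+2 -> R) :
    \sum_i f i = \sum_j f (lift ord_max j) + f ord_max.
  rewrite big_ord_recr /=; congr (_ + _); apply: eq_bigr => j _.
  by congr f; apply: val_inj; rewrite /= /bump leqNgt ltn_ord.
have sk' : \sum_j k (lift ord_max j) = - k ord_max.
  by apply/eqP; rewrite -addr_eq0 -(sum_lift k) sk.
have k_max : k ord_max = 0.
  have : \sum_i k i * dotv c (q i) = 0.
    by rewrite dotv_lincomb big1 // => v _; rewrite rel mulr0.
  rewrite sum_lift q_max; under eq_bigr do rewrite q_lift (QP _ (Qp _)).2.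
  rewrite -mulr_suml sk' => h.
  have /eqP : k ord_max * (dotv c y - d) = 0 by rewrite mulrBr; lra.
  by rewrite mulf_eq0 subr_eq0 (negbTE yd) orbF => /eqP.
have k'0 := p_indep (fun j => k (lift ord_max j)).
move=> i; case: (unliftP ord_max i) => [j ->|->] //; apply: k'0.
  by rewrite sk' k_max oppr0.
move=> v; rewrite -[RHS](rel v) sum_lift q_max k_max mul0r addr0.
by apply: eq_bigr => l _; rewrite q_lift.
Qed.

Lemma affdim_codim2 P F c e d (u : Upsilon N) k :
  (forall x, F x -> [/\ P x, dotv c x = d & x u = 0]) -> d != 0 ->
  P 0 -> P e -> e u != 0 -> has_affdim P k -> ~ has_affdim F (k - 1).
Proof.
move=> FP d0 P0 Pe eu [[_ Pn] | [n [-> [_ Pn]]]] hF; first exact: Pn 0 P0.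
pose Q x := P x /\ x u = 0.
have Qn : affdim_atleast Q n.
  case: hF => [[hn _] | [m [hm [Fm _]]]].
    have -> : n = 0%N by lia.
    by apply: (affdim_atleast0 (x := 0)); rewrite /Q ffunE.
  have -> : n = m.+1 by lia.
  apply: (affdim_atleastS (c := c) (y := 0) (d := d)) Fm.
  - by move=> x /FP [].
  - by rewrite /Q ffunE.
  - by rewrite dotv0 eq_sym.
apply: Pn; apply: (affdim_atleastS (c := [ffun v => (v == u)%:R]) (d := 0) _ Pe) Qn.
  by move=> x [Px xu]; rewrite dotv_coord.
by rewrite dotv_coord.
Qed.

End AffineDimension.

Section Facet.

Variables (R : realFieldType) (N : finType) (D : {set graph N}) (c : vec R N) (d : R).
Hypothesis D_dag : D \subset DAG N.
Hypothesis PN_le : forall x, PN x -> dotv c x <= d.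
Hypothesis conv_faceP : forall x, conv D x <-> PN x /\ dotv c x = d.

Lemma facet_score G : G \in D -> dotv c (eta R G) = d.
Proof. by move=> GD; have [] := (conv_faceP _).1 (eta_conv R GD). Qed.

Lemma facet_memP G : G \in DAG N -> G \in D <-> dotv c (eta R G) = d.
Proof.
move=> dG; split=> [/facet_score // | e].
apply: (conv_eta_mem D_dag dG); apply/conv_faceP; split=> //; exact: eta_conv.
Qed.

Lemma facet_d_neq0 : set0 \notin D -> d != 0.
Proof.
apply: contraNneq => d0; apply/facet_memP; first by rewrite inE dag_set0.
by rewrite eta_set0 dotv0 d0.
Qed.

Lemma facet_exchange G G' K K' a :
  G \in D -> K \in D -> G' \in DAG N -> K' \in DAG N ->
  (forall x, x != a -> pa G' x = pa G x) -> (forall x, x != a -> pa K' x = pa K x) ->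
  pa G' a = pa K a -> pa K' a = pa G a -> K' \in D.
Proof.
move=> GD KD dG' dK' GG' KK' G'a K'a; apply/facet_memP => //.
have := dotv_eta_exchange c GG' KK' G'a K'a; rewrite (facet_score GD) (facet_score KD).
have := PN_le (eta_conv R dG'); have := PN_le (eta_conv R dK'); lra.
Qed.

Lemma facet_setU1 K b a :
  (forall u : Upsilon N, exists2 G, G \in D & pa G (val u).1 = (val u).2) ->
  K \in D -> (b, a) \notin K -> (b, a) |: K \in DAG N -> (b, a) |: K \in D.
Proof.
move=> realize KD baK dK'; set K' := (b, a) |: K.
have uP : (a \notin pa K' a) && (pa K' a != set0).
  rewrite inE dag_loopN /=; last by move: dK'; rewrite inE.
  by apply/set0Pn; exists b; rewrite inE setU11.
have [G GD /= paG] := realize (exist _ (a, pa K' a) uP).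
apply: (facet_exchange (G' := G :\ (b, a)) (a := a) GD KD) => //.
- rewrite inE; apply: dag_sub (subD1set _ _) _.
  by move: (subsetP D_dag _ GD); rewrite inE.
- by move=> x xa; rewrite pa_setD1 (negbTE xa).
- by move=> x xa; rewrite /K' pa_setU1 (negbTE xa).
- by rewrite pa_setD1 eqxx paG /K' pa_setU1 eqxx setU1K // inE.
Qed.

Lemma facet_realizes (k : int) :
  set0 \notin D -> has_affdim (@PN R N) k -> has_affdim (@conv R N D) (k - 1) ->
  forall u : Upsilon N, exists2 G, G \in D & pa G (val u).1 = (val u).2.
Proof.
move=> D0 hP hF u.
have [/exists_inP [G GD /eqP] | none] := boolP [exists G in D, pa G (val u).1 == (val u).2].
  by exists G.
exfalso; case/andP: (valP u) => aB _.
have conv_u0 x : conv D x -> x u = 0.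
  case=> w [_ wD _ ->]; apply: big1 => G _.
  have [GD | /wD ->] := boolP (G \in D); last by rewrite mul0r.
  rewrite etaE; case: eqP; rewrite ?mulr0 // => paG.
  by move: none; rewrite negb_exists_in => /forall_inP /(_ G GD); rewrite paG eqxx.
apply: (affdim_codim2 (c := c) (e := eta R [set (b, (val u).1) | b in (val u).2]) (u := u)
          _ (facet_d_neq0 D0) _ _ _ hP hF).
- by move=> x Fx; have [PNx cx] := (conv_faceP x).1 Fx; split=> //; exact: conv_u0.
- by rewrite -eta_set0; apply: eta_conv; rewrite inE dag_set0.
- by apply: eta_conv; rewrite inE dag_star.
- by rewrite etaE pa_star eqxx oner_neq0.
Qed.

End Facet.

Local Close Scope ring_scope.

Theorem corollary2 (R : realFieldType) (N : finType) (D : {set graph N}) :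
  1 < #|N| ->
  @is_facet R N D ->
  (set0 : graph N) \notin D ->
  (forall G H : graph N, G \in D -> H \in DAG N -> G \subset H -> H \in D) /\
  (forall u : Upsilon N, exists2 G : graph N, G \in D & pa G (val u).1 = (val u).2).
Proof.
move=> _ [D_dag [[c [d [PN_le conv_faceP]]] [k [hP hF]]]] D0.
have realize := facet_realizes D_dag conv_faceP D0 hP hF.
split=> // G H GD dH; apply: mem_sup_of_setU1_closed GD => K [b a] KD sKH.
rewrite inE => /andP [baK baH].
apply: (facet_setU1 D_dag PN_le conv_faceP realize KD baK).
by move: dH; rewrite !inE; apply: dag_sub; rewrite subUset sub1set baH.
Qed.
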